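(* Let $G_0$ be a fixed $n\times l$ binary matrix, $G_1$ a fixed $n\times k$ binary matrix, $\mathbf m\in\{0,1\}^k$ fixed, and $1\le u\le n$. Then $$P(E=0\mid U=u)\le \min\left\{\frac{\sum_{w=d_0}^{u} B_{0,w}\binom{n-w}{u-w}}{\binom{n}{u}},\;1\right\}.$$
   Context: All arithmetic is over $\mathrm{GF}(2)$. $\mathcal C_0^{\perp}=\{\mathbf x\in\{0,1\}^n: G_0^T\mathbf x=\mathbf 0\}$; $B_{0,w}$ is the number of vectors of Hamming weight $w$ in $\mathcal C_0^\perp$, and $d_0$ is the minimum Hamming weight of a nonzero vector of $\mathcal C_0^\perp$ (empty sums are $0$). Defect model: each of the $n$ memory cells is independently defective with probability $\beta\in(0,1)$; a defective cell is stuck at $0$ or at $1$, each with probability $1/2$, independently. Let $\mathcal U$ be the set of defect positions, $U=|\mathcal U|$, $\mathbf s^{\mathcal U}$ the vector of stuck-at values; conditionally on $U=u$, $\mathcal U$ is a uniform random $u$-subset and $\mathbf s^{\mathcal U}$ is uniform on $\{0,1\}^u$. For a matrix $M$ (resp. vector $\mathbf v$) with rows indexed by $\{1,\dots,n\}$, $M^{\mathcal U}$ (resp. $\mathbf v^{\mathcal U}$) denotes the rows indexed by $\mathcal U$. Encoding: with $\mathbf b^{\mathcal U}=(G_1\mathbf m)^{\mathcal U}+\mathbf s^{\mathcal U}$, look for $\mathbf d\in\{0,1\}^l$ with $G_0^{\mathcal U}\mathbf d=\mathbf b^{\mathcal U}$; $E=1$ if such $\mathbf d$ exists and $E=0$ (encoding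 failure) otherwise. *)

From HB Require Import structures.
From mathcomp Require Import all_boot all_order all_algebra.
Set Implicit Arguments. Unset Strict Implicit. Unset Printing Implicit Defensive.
Import Order.TTheory GRing.Theory Num.Theory.
Local Open Scope ring_scope.

Notation F2 := 'F_2.

Definition hwt (n : nat) (x : 'cV[F2]_n) : nat := #|[set i : 'I_n | x i 0 != 0]|.

Definition in_dual (n l : nat) (G0 : 'M[F2]_(n, l)) (x : 'cV[F2]_n) : bool :=
  G0^T *m x == 0.

Definition Bw (n l : nat) (G0 : 'M[F2]_(n, l)) (w : nat) : nat :=
  #|[set x : 'cV[F2]_n | in_dual G0 x && (hwt x == w)]|.

(* d_0: minimum weight of a nonzero dual codeword; if there is none we use
   n.+1, which makes the sum from d_0 to u <= n empty (value 0). *)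
Definition d0 (n l : nat) (G0 : 'M[F2]_(n, l)) : nat :=
  \big[minn/n.+1]_(x : 'cV[F2]_n | in_dual G0 x && (x != 0)) hwt x.

(* A defect pattern: for each cell, None = not defective,
   Some b = defective, stuck at b. *)
Definition pattern (n : nat) := {ffun 'I_n -> option F2}.

Definition ndef (n : nat) (p : pattern n) : nat := #|[set i : 'I_n | p i != None]|.

Definition encodable (n l k : nat) (G0 : 'M[F2]_(n, l)) (G1 : 'M[F2]_(n, k))
  (m : 'cV[F2]_k) (p : pattern n) : bool :=
  [exists d : 'cV[F2]_l, [forall i : 'I_n,
     if p i is Some s then (G0 *m d) i 0 == (G1 *m m) i 0 + s else true]].

(* Probability of a pattern: each cell independently defective with prob.
   beta, stuck at 0 or 1 with prob. 1/2 each. *)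
Definition pat_prob (R : realFieldType) (beta : R) (n : nat) (p : pattern n) : R :=
  \prod_(i < n) (if p i is Some _ then beta / 2%:R else 1 - beta).

Definition prob_fail_given_U (R : realFieldType) (beta : R) (n l k : nat)
  (G0 : 'M[F2]_(n, l)) (G1 : 'M[F2]_(n, k)) (m : 'cV[F2]_k) (u : nat) : R :=
  (\sum_(p : pattern n | (ndef p == u) && ~~ encodable G0 G1 m p) pat_prob beta p)
  / (\sum_(p : pattern n | ndef p == u) pat_prob beta p).

From HB Require Import structures.
From mathcomp Require Import all_boot all_order all_algebra.
Set Implicit Arguments. Unset Strict Implicit. Unset Printing Implicit Defensive.
Import Order.TTheory GRing.Theory Num.Theory.

(* Encoding fails only if the restricted system G0^U d = b^U is inconsistent,
   and by the Fredholm alternative this happens only if some nonzero dual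
   codeword x has its support inside U.  Conditionally on U = u all
   2^u C(n, u) defect patterns of size u are equally likely, so it suffices to
   count the patterns whose support contains the support of a nonzero dual
   codeword: a codeword of weight w <= u lies under C(n - w, u - w) supports
   of size u, each carrying 2^u stuck-at vectors.  The union bound over the
   B_{0,w} codewords of each weight w >= d_0 gives the estimate. *)

Definition supp n (p : pattern n) : {set 'I_n} := [set i | p i != None].

Definition wsupp n (x : 'cV['F_2]_n) : {set 'I_n} := [set i | (x i 0 != 0)%R].

Definition dual_word_in n l (G0 : 'M['F_2]_(n, l)) (S : {set 'I_n}) : bool :=
  [exists x : 'cV['F_2]_n, [&& in_dual G0 x, x != 0%R & wsupp x \subset S]].

Lemma cardsC_ord n (A : {set 'I_n}) : #|~: A| = n - #|A|.
Proof. by apply: canRL (addKn _) _; rewrite cardsC card_ord. Qed.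

Lemma card_patterns_supp_eq n (S : {set 'I_n}) :
  #|[set p : pattern n | supp p == S]| = 2 ^ #|S|.
Proof.
pose F i := [pred o : option 'F_2 | (o != None) == (i \in S)].
have -> : [set p : pattern n | supp p == S] = [set p in family F].
  apply/setP => p; rewrite !inE; apply/eqP/familyP => [pS i|Fp].
    by rewrite /F inE -pS inE.
  by apply/setP => i; rewrite /supp inE; have := Fp i; rewrite /F inE => /eqP.
rewrite cardsE card_family foldrE /image_mem big_map big_enum /=.
rewrite -prod_nat_const [RHS]big_mkcond /=; apply: eq_bigr => i _.
rewrite /F; case: (i \in S).
  transitivity #|predC1 (None : option 'F_2)|; last by rewrite cardC1 card_option card_Fp.
  by apply: eq_card => o; rewrite -topredE /= eqb_id.
transitivity #|pred1 (None : option 'F_2)|; last exact: card1.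
by apply: eq_card => o; rewrite -topredE /= eqbF_neg negbK.
Qed.

Lemma card_patterns_supp n (Q : pred {set 'I_n}) :
  #|[set p : pattern n | Q (supp p)]| = \sum_(S | Q S) 2 ^ #|S|.
Proof.
rewrite -sum1_card (partition_big (@supp n) Q) /=; last by move=> p; rewrite inE.
apply: eq_bigr => S QS; rewrite -card_patterns_supp_eq -sum1_card.
by apply: eq_bigl => p; rewrite !inE; case: eqP => [->|]; rewrite ?QS ?andbF.
Qed.

Lemma card_patterns_supp_card n (Q : pred {set 'I_n}) u :
  (forall S, Q S -> #|S| = u) ->
  #|[set p : pattern n | Q (supp p)]| = 2 ^ u * #|[set S | Q S]|.
Proof.
move=> QS; rewrite card_patterns_supp (eq_bigr (fun _ => 2 ^ u)) => [|S /QS -> //].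
by rewrite sum_nat_const mulnC cardsE.
Qed.

Local Open Scope ring_scope.

Lemma not_submx_annihilator (F : fieldType) m n (a : 'rV[F]_n) (B : 'M[F]_(m, n)) :
  ~~ (a <= B)%MS -> exists2 y : 'cV_n, B *m y = 0 & a *m y != 0.
Proof.
rewrite submxE => aB.
have [j aj] : exists j, (a *m cokermx B) 0 j != 0.
  apply/existsP; apply: contraNT aB => /existsPn a0.
  by apply/eqP/matrixP => i j; rewrite (ord1 i) [RHS]mxE; apply/eqP; move: (a0 j); rewrite negbK.
exists (col j (cokermx B)); rewrite colE mulmxA; first by rewrite mulmx_coker mul0mx.
by apply: contra aj => /eqP/matrixP/(_ 0 0); rewrite -colE !mxE => ->.
Qed.

Lemma encodable_of_no_dual_word n l k (G0 : 'M['F_2]_(n, l)) (G1 : 'M['F_2]_(n, k))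
    (m : 'cV['F_2]_k) (p : pattern n) :
  ~~ dual_word_in G0 (supp p) -> encodable G0 G1 m p.
Proof.
move=> no_word.
(* P projects onto the defect positions, so solvability of the restricted
   system amounts to c^T P lying in the row space of G0^T P. *)
pose P : 'M['F_2]_n := diag_mx (\row_i (i \in supp p)%:R).
pose c : 'cV['F_2]_n := G1 *m m + \col_i odflt 0 (p i).
have : (c^T *m P <= G0^T *m P)%MS.
  apply: contraNT no_word => /not_submx_annihilator [y Gy cy].
  apply/existsP; exists (P *m y); apply/and3P; split.
  - by rewrite /in_dual mulmxA Gy eqxx.
  - by apply: contraNneq cy => Py; rewrite -mulmxA Py mulmx0.
  - apply/subsetP => i; apply: contraTT => not_i.
    by rewrite inE mul_diag_mx !mxE (negbTE not_i) mul0r negbK.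
case/submxP => D cPD; apply/existsP; exists D^T; apply/forallP => i.
case pi: (p i) => [s|] //.
have i_supp : i \in supp p by rewrite inE pi.
have := congr1 (fun M => M^T i 0) cPD.
rewrite !trmx_mul !trmxK tr_diag_mx -mulmxA !mul_diag_mx !mxE i_supp !mul1r.
by rewrite pi => <-.
Qed.

Local Close Scope ring_scope.

Lemma card_supsets_le n (A : {set 'I_n}) u :
  #|[set S : {set 'I_n} | (#|S| == u) && (A \subset S)]| <=
    (#|A| <= u) * 'C(n - #|A|, u - #|A|).
Proof.
case: (leqP #|A| u) => hA; last first.
  rewrite leqn0 cards_eq0; apply/eqP/setP => S; rewrite !inE.
  apply/negbTE/negP => /andP[/eqP Su /subset_leq_card].
  by rewrite Su leqNgt hA.
have splitS (S : {set 'I_n}) : A \subset S -> S = A :|: (S :\: A).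
  by move=> AS; rewrite -{1}(setID S A) (setIidPr AS).
rewrite mul1n -(card_in_imset (f := fun S => S :\: A)); last first.
  move=> S1 S2; rewrite !inE => /andP[_ AS1] /andP[_ AS2] eqD.
  by rewrite (splitS _ AS1) (splitS _ AS2) /= eqD.
rewrite -cardsC_ord -cards_draws; apply/subset_leq_card/subsetP => B /imsetP[S].
rewrite !inE => /andP[/eqP Su AS] ->.
by rewrite setDE subsetIr -setDE cardsDS // Su eqxx.
Qed.

Section DualWordCount.

Variables (n l : nat) (G0 : 'M['F_2]_(n, l)).

Let nz_dual (x : 'cV['F_2]_n) := in_dual G0 x && (x != 0%R).

Lemma card_dual_word_supports_union u :
  #|[set S : {set 'I_n} | (#|S| == u) && dual_word_in G0 S]| <=
  \sum_(x | nz_dual x) #|[set S : {set 'I_n} | (#|S| == u) && (wsupp x \subset S)]|.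
Proof.
rewrite -[X in X <= _]sum1_card [X in X <= _]big_mkcond /=.
apply: (@leq_trans (\sum_(S : {set 'I_n}) \sum_(x | nz_dual x)
                        ((#|S| == u) && (wsupp x \subset S) : nat))).
  apply: leq_sum => S _; rewrite inE.
  case: (boolP (#|S| == u)) => //= _; case: (boolP (dual_word_in G0 S)) => //=.
  case/existsP => x /and3P[xG x0 xS].
  by rewrite (bigD1 x) /nz_dual ?xG ?x0 //= xS.
rewrite exchange_big /=; apply: leq_sum => x _.
rewrite -[X in _ <= X]sum1_card [X in _ <= X]big_mkcond /=.
by apply: leq_sum => S _; rewrite inE; case: (_ && _).
Qed.

Lemma d0_le_hwt x : nz_dual x -> d0 G0 <= hwt x.
Proof. exact: (bigmin_le_cond n.+1 (P := nz_dual) (@hwt n)). Qed.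

Lemma card_dual_word_supports u :
  #|[set S : {set 'I_n} | (#|S| == u) && dual_word_in G0 S]| <=
  \sum_(d0 G0 <= w < u.+1) Bw G0 w * 'C(n - w, u - w).
Proof.
apply: leq_trans (card_dual_word_supports_union u) _.
apply: (@leq_trans (\sum_(x | nz_dual x) \sum_(d0 G0 <= w < u.+1)
            ((in_dual G0 x && (hwt x == w)) * 'C(n - w, u - w)))).
  apply: leq_sum => x x_nz; apply: leq_trans (card_supsets_le _ _) _.
  case: (leqP (hwt x) u) => //= xu; rewrite mul1n.
  have x_range : hwt x \in index_iota (d0 G0) u.+1.
    by rewrite mem_index_iota d0_le_hwt.
  rewrite (bigD1_seq (hwt x)) ?iota_uniq //=.
  by case/andP: x_nz => -> _; rewrite eqxx mul1n leq_addr.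
rewrite exchange_big /=; apply: leq_sum => w _.
rewrite -big_distrl leq_mul2r; apply/orP; right.
rewrite /Bw -sum1_card [X in _ <= X]big_mkcond [X in X <= _]big_mkcond /=.
by apply: leq_sum => x _; rewrite inE; case: (nz_dual x); case: (_ && _).
Qed.

End DualWordCount.

Local Open Scope ring_scope.

Lemma pat_prob_ndef (R : realFieldType) (beta : R) n (p : pattern n) :
  pat_prob beta p = (beta / 2%:R) ^+ ndef p * (1 - beta) ^+ (n - ndef p).
Proof.
rewrite /pat_prob (bigID (mem (supp p))) /=.
rewrite (eq_bigr (fun=> beta / 2%:R)) => [|i]; last by rewrite inE; case: (p i).
rewrite [X in _ * X](eq_bigr (fun=> 1 - beta)) => [|i]; last by rewrite inE negbK => /eqP ->.
rewrite !prodr_const -cardsC_ord -/(supp p); congr (_ * _ ^+ _).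
by apply: eq_card => i; rewrite -topredE /= !inE.
Qed.

Lemma sum_pat_prob_ndef (R : realFieldType) (beta : R) n u (P : pred (pattern n)) :
  (forall p, P p -> ndef p = u) ->
  \sum_(p | P p) pat_prob beta p =
  #|[set p | P p]|%:R * ((beta / 2%:R) ^+ u * (1 - beta) ^+ (n - u)).
Proof.
move=> Pu; rewrite (eq_bigr (fun=> (beta / 2%:R) ^+ u * (1 - beta) ^+ (n - u))).
  by rewrite mulr_natl -sumr_const; apply: eq_bigl => p; rewrite inE.
by move=> p /Pu <-; apply: pat_prob_ndef.
Qed.

Local Close Scope ring_scope.

Lemma card_ndef_eq n u : #|[set p : pattern n | ndef p == u]| = 2 ^ u * 'C(n, u).
Proof.
rewrite (card_patterns_supp_card (Q := fun S => #|S| == u) (u := u)) => [|S /eqP //].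
by rewrite card_draws card_ord.
Qed.

Lemma card_not_encodable_le n l k (G0 : 'M['F_2]_(n, l)) (G1 : 'M['F_2]_(n, k))
    (m : 'cV['F_2]_k) u :
  #|[set p : pattern n | (ndef p == u) && ~~ encodable G0 G1 m p]| <=
  2 ^ u * \sum_(d0 G0 <= w < u.+1) Bw G0 w * 'C(n - w, u - w).
Proof.
pose Q (S : {set 'I_n}) := (#|S| == u) && dual_word_in G0 S.
apply: (@leq_trans #|[set p : pattern n | Q (supp p)]|).
  apply/subset_leq_card/subsetP => p; rewrite !inE => /andP[pu /=].
  by rewrite /Q pu; apply: contraR => /encodable_of_no_dual_word ->.
rewrite (card_patterns_supp_card (u := u)) => [|S /andP[/eqP //]].
by rewrite leq_mul2l card_dual_word_supports orbT.
Qed.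

Local Open Scope ring_scope.

Lemma prob_fail_given_U_card (R : realFieldType) (beta : R) n l k
    (G0 : 'M['F_2]_(n, l)) (G1 : 'M['F_2]_(n, k)) (m : 'cV['F_2]_k) u :
  0 < beta < 1 ->
  prob_fail_given_U beta G0 G1 m u =
  #|[set p : pattern n | (ndef p == u) && ~~ encodable G0 G1 m p]|%:R /
  #|[set p : pattern n | ndef p == u]|%:R.
Proof.
case/andP=> b0 b1; rewrite /prob_fail_given_U.
rewrite !(@sum_pat_prob_ndef R beta n u) => [|p /eqP //|p /andP[/eqP] //].
rewrite -mulf_div divff ?mulr1 // gt_eqF // mulr_gt0 // exprn_gt0 //.
  by rewrite divr_gt0.
by rewrite subr_gt0.
Qed.

Theorem lemma1 (R : realFieldType) (beta : R) (hb0 : 0 < beta) (hb1 : beta < 1)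
  (n l k : nat) (G0 : 'M['F_2]_(n, l)) (G1 : 'M['F_2]_(n, k)) (m : 'cV['F_2]_k)
  (u : nat) (hu1 : (1 <= u)%N) (hun : (u <= n)%N) :
  prob_fail_given_U beta G0 G1 m u <=
  Num.min ((\sum_(d0 G0 <= w < u.+1) (Bw G0 w)%:R * ('C(n - w, u - w))%:R)
             / ('C(n, u))%:R) 1.
Proof.
rewrite prob_fail_given_U_card ?hb0 //.
have C_gt0 : (0 < 'C(n, u))%N by rewrite bin_gt0.
rewrite card_ndef_eq le_min !ler_pdivrMr ?ltr0n ?muln_gt0 ?expn_gt0 // mul1r.
apply/andP; split.
  rewrite -(eq_bigr _ (fun w _ => natrM _ _ _)) -natr_sum natrM mulrCA divfK.
    by rewrite -natrM ler_nat card_not_encodable_le.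
  by rewrite pnatr_eq0 -lt0n.
rewrite -card_ndef_eq ler_nat.
by apply/subset_leq_card/subsetP => p; rewrite !inE => /andP[].
Qed.
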